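(* With $U_0,\Omega'_0,y,\Upsilon_y,S_1,S_2$ as in the context, one has on $\mathbb{K}^E$ $$dS_1\wedge dS_2=2\sin\Upsilon_y\,e^{-4U_0}\,d\Omega'_0\wedge\star d\Omega'_0,$$ and consequently the one-form $\mathbf{T}_1=\frac{1}{2\rho}S_1\star dS_2$ satisfies $$d(\rho\star\mathbf{T}_1)+\sin\Upsilon_y\,e^{-4U_0}\,d\Omega'_0\wedge\star d\Omega'_0=0,$$ i.e. the associated axially symmetric vector field $\vec T_1=T_1^\rho\partial_\rho+T_1^z\partial_z$ satisfies $\nabla_aT_1^a=-\psi_y\,e^{-4U_0}(d\Omega'_0,d\Omega'_0)_\gamma$ on $D_0$ off the axis, where $\psi_y=1/\sqrt{\rho^2+(z-y)^2}$.
   Context: Let $\mathbb{E}^3$ have cylindrical coordinates $(\rho,z,\phi)$ and flat metric $\gamma=d\rho^2+dz^2+\rho^2d\phi^2$, with covariant derivative $\nabla$. Let $\Sigma_0$ be a $C^1$ axially symmetric surface diffeomorphic to a 2-sphere, given by $\{\rho=\rho_0(\mu),z=z_0(\mu),\phi=\varphi\}$, $\mu\in[\mu_S,\mu_N]$, with $\mu_S<\mu_N$ the only zeros of $\rho_0$ and $z_S:=z_0(\mu_S)<z_N:=z_0(\mu_N)$; $D_0$ is its unbounded exterior region. A function $f$ on $D_0$ is regular if it is $C^2$ on $D_0$, has a $C^1$ extension to $D_0\cup\Sigma_0$, and $rf$ is bounded ($r=\sqrt{\rho^2+z^2}$). $\mathbb{K}=\{(\rho,z):\rho\ge0\}$ carries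 the metric $d\rho^2+dz^2$ and Hodge star with $\star d\rho=-dz$, $\star dz=d\rho$; axially symmetric functions and one-forms $T^\rho d\rho+T^zdz$ are identified with objects on $\mathbb{K}$; $\mathbb{K}^E$ is the projection of $D_0$. $U_0$ is an axially symmetric regular flat-harmonic function on $D_0$ and $\Omega'_0$ an axially symmetric regular solution of $\triangle_\gamma\Omega'_0-4(d\Omega'_0,dU_0)_\gamma=0$. For $y\in(z_S,z_N)$: $\cos\Upsilon_y=(z-y)/\sqrt{\rho^2+(z-y)^2}$, $\sin\Upsilon_y=\rho/\sqrt{\rho^2+(z-y)^2}$; $Z_y$ is the solution of $dZ_y=\cos\Upsilon_y\,dU_0+\sin\Upsilon_y\star dU_0$ vanishing at infinity; $S_1,S_2$ are the solutions vanishing at infinity of $dS_1=e^{-2U_0+2Z_y}[-(1+\cos\Upsilon_y)d\Omega'_0-\sin\Upsilon_y\star d\Omega'_0]$ and $dS_2=e^{-2U_0-2Z_y}[(1-\cos\Upsilon_y)d\Omega'_0-\sin\Upsilon_y\star d\Omega'_0]$. *)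

From Stdlib Require Import Reals.
From Coquelicot Require Import Coquelicot.
Open Scope R_scope.

(* Axially symmetric objects are represented on the meridian half-plane K,
   coordinates (rho, z): a function is  u : R -> R -> R  (u rho z),
   a one-form  T^rho drho + T^z dz  is the pair of component functions,
   a two-form  f drho/\dz  is its coefficient function f. *)

Definition pd_rho (u : R -> R -> R) : R -> R -> R :=
  fun r z => Derive (fun t => u t z) r.
Definition pd_z (u : R -> R -> R) : R -> R -> R :=
  fun r z => Derive (fun t => u r t) z.

Definition C1_on (O : R -> R -> Prop) (u : R -> R -> R) : Prop :=
  forall r z, O r z ->
    ex_derive (fun t => u t z) r /\ ex_derive (fun t => u r t) z /\
    continuity_2d_pt u r z /\ continuity_2d_pt (pd_rho u) r z /\
    continuity_2d_pt (pd_z u) r z.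

Definition C2_on (O : R -> R -> Prop) (u : R -> R -> R) : Prop :=
  C1_on O u /\ C1_on O (pd_rho u) /\ C1_on O (pd_z u).

Definition form1 : Type := ((R -> R -> R) * (R -> R -> R))%type.

Definition dF (u : R -> R -> R) : form1 := (pd_rho u, pd_z u).

(* Hodge star on K with  *drho = -dz, *dz = drho :
   *(a drho + b dz) = b drho - a dz *)
Definition hodge (w : form1) : form1 :=
  (fun r z => snd w r z, fun r z => - fst w r z).

Definition fadd (w v : form1) : form1 :=
  (fun r z => fst w r z + fst v r z, fun r z => snd w r z + snd v r z).
Definition fscale (f : R -> R -> R) (w : form1) : form1 :=
  (fun r z => f r z * fst w r z, fun r z => f r z * snd w r z).

Definition wedge (w v : form1) : R -> R -> R :=
  fun r z => fst w r z * snd v r z - snd w r z * fst v r z.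

Definition dform (w : form1) : R -> R -> R :=
  fun r z => pd_rho (snd w) r z - pd_z (fst w) r z.

Definition has_differential (O : R -> R -> Prop) (u : R -> R -> R) (w : form1)
  : Prop :=
  forall r z, O r z ->
    is_derive (fun t => u t z) r (fst w r z) /\
    is_derive (fun t => u r t) z (snd w r z).

(* Generating curve mu |-> (rho0 mu, z0 mu), mu in [muS, muN], of a C^1
   axially symmetric surface diffeomorphic to S^2. *)
Definition axisym_sphere (rho0 z0 : R -> R) (muS muN : R) : Prop :=
  muS < muN /\
  rho0 muS = 0 /\ rho0 muN = 0 /\
  (forall mu, muS < mu < muN -> 0 < rho0 mu) /\
  z0 muS < z0 muN /\
  (forall mu, muS <= mu <= muN ->
     ex_derive rho0 mu /\ ex_derive z0 mu /\
     continuity_pt (Derive rho0) mu /\ continuity_pt (Derive z0) mu /\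
     (Derive rho0 mu <> 0 \/ Derive z0 mu <> 0)) /\
  Derive z0 muS = 0 /\ Derive z0 muN = 0 /\
  (forall m1 m2, muS <= m1 <= muN -> muS <= m2 <= muN ->
     rho0 m1 = rho0 m2 -> z0 m1 = z0 m2 -> m1 = m2).

Definition OnCurve (rho0 z0 : R -> R) (muS muN : R) (r z : R) : Prop :=
  exists mu, muS <= mu <= muN /\ r = rho0 mu /\ z = z0 mu.

Definition half_minus_curve rho0 z0 muS muN (r z : R) : Prop :=
  0 <= r /\ ~ OnCurve rho0 z0 muS muN r z.

(* K^E : projection of the unbounded exterior D_0, i.e. the unbounded
   connected component of {rho >= 0} minus the generating curve: points that
   can be joined, avoiding the curve, to points arbitrarily far away. *)
Definition KE rho0 z0 muS muN (r z : R) : Prop :=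
  half_minus_curve rho0 z0 muS muN r z /\
  forall M : R, exists g1 g2 : R -> R,
    (forall t, 0 <= t <= 1 -> continuity_pt g1 t /\ continuity_pt g2 t) /\
    g1 0 = r /\ g2 0 = z /\
    M < sqrt (g1 1 ^ 2 + g2 1 ^ 2) /\
    (forall t, 0 <= t <= 1 -> half_minus_curve rho0 z0 muS muN (g1 t) (g2 t)).

(* K^E off the axis (corresponds to D_0 off the axis) *)
Definition KEo rho0 z0 muS muN (r z : R) : Prop :=
  KE rho0 z0 muS muN r z /\ 0 < r.

Definition has_lim_within (O : R -> R -> Prop) (f : R -> R -> R) (r0 z0 : R)
  : Prop :=
  exists L, forall eps, 0 < eps -> exists delta, 0 < delta /\
    forall r z, O r z -> Rabs (r - r0) < delta -> Rabs (z - z0) < delta ->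
      Rabs (f r z - L) < eps.

Definition regular rho0 z0 muS muN (u : R -> R -> R) : Prop :=
  C2_on (KEo rho0 z0 muS muN) u /\
  (forall mu, muS <= mu <= muN ->
     has_lim_within (KEo rho0 z0 muS muN) u (rho0 mu) (z0 mu) /\
     has_lim_within (KEo rho0 z0 muS muN) (pd_rho u) (rho0 mu) (z0 mu) /\
     has_lim_within (KEo rho0 z0 muS muN) (pd_z u) (rho0 mu) (z0 mu)) /\
  (exists B, forall r z, KE rho0 z0 muS muN r z ->
     sqrt (r ^ 2 + z ^ 2) * Rabs (u r z) <= B).

Definition vanishes_at_infinity rho0 z0 muS muN (u : R -> R -> R) : Prop :=
  forall eps, 0 < eps -> exists M, forall r z, KE rho0 z0 muS muN r z ->
    M < sqrt (r ^ 2 + z ^ 2) -> Rabs (u r z) < eps.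

(* flat Laplacian of an axially symmetric function, in cylindrical coords *)
Definition lap (u : R -> R -> R) : R -> R -> R :=
  fun r z => pd_rho (pd_rho u) r z + / r * pd_rho u r z + pd_z (pd_z u) r z.

Definition ip (u v : R -> R -> R) : R -> R -> R :=
  fun r z => pd_rho u r z * pd_rho v r z + pd_z u r z * pd_z v r z.

Definition cosU (y : R) : R -> R -> R :=
  fun r z => (z - y) / sqrt (r ^ 2 + (z - y) ^ 2).
Definition sinU (y : R) : R -> R -> R :=
  fun r z => r / sqrt (r ^ 2 + (z - y) ^ 2).
Definition psi (y : R) : R -> R -> R :=
  fun r z => / sqrt (r ^ 2 + (z - y) ^ 2).

Definition T1 (S1 S2 : R -> R -> R) : form1 :=
  fscale (fun r z => / (2 * r) * S1 r z) (hodge (dF S2)).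

Definition rho_times (w : form1) : form1 := fscale (fun r _ => r) w.

(* flat divergence of the axisymmetric vector field T^rho d_rho + T^z d_z *)
Definition div_axi (w : form1) : R -> R -> R :=
  fun r z => / r * pd_rho (fun r' z' => r' * fst w r' z') r z + pd_z (snd w) r z.

(* Off the axis, ** = -1 on one-forms gives rho *T_1 = -S_1 dS_2 / 2, hence
   d(rho *T_1) = -(dS_1 /\ dS_2 + S_1 d(dS_2)) / 2.  The wedge product of the two prescribed
   forms is computed pointwise, and d(dS_2) = 0 is the integrability condition of the equation
   for S_2: expanding d(e^(-2U_0 - 2Z_y) [(1 - cos Upsilon_y) dOmega'_0 - sin Upsilon_y *dOmega'_0])
   with the prescribed dZ_y leaves a multiple of the equation for Omega'_0.  The divergence
   identity is d(rho *T_1) divided by -rho. *)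

From Stdlib Require Import Reals Lra.
From Coquelicot Require Import Coquelicot.
Open Scope R_scope.

Definition ramp (u : R) : R := (u + Rabs u) / 2.

Lemma ramp_of_nonneg (u : R) : 0 <= u -> ramp u = u.
Proof. intros Hu; unfold ramp; rewrite Rabs_pos_eq; lra. Qed.

Lemma ramp_of_nonpos (u : R) : u <= 0 -> ramp u = 0.
Proof. intros Hu; unfold ramp; rewrite Rabs_left1; lra. Qed.

Lemma ramp_bounds (u : R) : u <= 1 -> 0 <= ramp u <= 1.
Proof.
  intros Hu; destruct (Rle_or_lt 0 u).
  - rewrite ramp_of_nonneg; lra.
  - rewrite ramp_of_nonpos; lra.
Qed.

Lemma continuity_pt_ramp (f : R -> R) (x : R) :
  continuity_pt f x -> continuity_pt (fun t => ramp (f t)) x.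
Proof.
  intros Hf; unfold ramp.
  apply continuity_pt_div; [| apply continuity_pt_const; intros ? ?; reflexivity | lra].
  apply continuity_pt_plus; [exact Hf|].
  exact (continuity_pt_comp f Rabs x Hf (Rcontinuity_abs (f x))).
Qed.

Lemma continuity_pt_ex_derive (f : R -> R) (x : R) : ex_derive f x -> continuity_pt f x.
Proof. intros H; apply continuity_pt_filterlim, (ex_derive_continuous f x H). Qed.

Section Exterior.

Variables (rho0 z0 : R -> R) (muS muN : R).

(* Run first along the segment from (a, b) to (r, z), then along an escape path of (r, z);
   ramp reparametrises the two halves of [0, 1]. *)
Lemma KE_of_segment (r z a b : R) :
  KE rho0 z0 muS muN r z ->
  (forall t, 0 <= t <= 1 ->
     half_minus_curve rho0 z0 muS muN (r + t * (a - r)) (z + t * (b - z))) ->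
  KE rho0 z0 muS muN a b.
Proof.
  intros [_ Hesc] Hseg; split.
  { replace a with (r + 1 * (a - r)) by ring; replace b with (z + 1 * (b - z)) by ring.
    apply Hseg; lra. }
  intros M; destruct (Hesc M) as [g1 [g2 [Hg [E1 [E2 [HM Hpath]]]]]].
  exists (fun t => g1 (ramp (2 * t - 1)) + ramp (1 - 2 * t) * (a - r)).
  exists (fun t => g2 (ramp (2 * t - 1)) + ramp (1 - 2 * t) * (b - z)).
  split; [|split; [|split; [|split]]].
  - intros t Ht.
    assert (Hin : 0 <= ramp (2 * t - 1) <= 1) by (apply ramp_bounds; lra).
    assert (C1 : continuity_pt (fun t => ramp (2 * t - 1)) t) by (apply continuity_pt_ramp; reg).
    assert (C2 : continuity_pt (fun t => ramp (1 - 2 * t)) t) by (apply continuity_pt_ramp; reg).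
    destruct (Hg _ Hin) as [G1 G2].
    split; apply continuity_pt_plus;
      solve [ apply (continuity_pt_comp (fun t => ramp (2 * t - 1))); assumption
            | apply continuity_pt_mult; [assumption | apply continuity_pt_const; intros ? ?; reflexivity] ].
  - rewrite ramp_of_nonpos, ramp_of_nonneg by lra; rewrite E1; ring.
  - rewrite ramp_of_nonpos, ramp_of_nonneg by lra; rewrite E2; ring.
  - rewrite (ramp_of_nonpos (1 - 2 * 1)), ramp_of_nonneg by lra.
    replace (2 * 1 - 1) with 1 by ring; rewrite !Rmult_0_l, !Rplus_0_r; exact HM.
  - intros t Ht; destruct (Rle_or_lt 0 (2 * t - 1)).
    + rewrite (ramp_of_nonpos (1 - 2 * t)) by lra; rewrite !Rmult_0_l, !Rplus_0_r.
      apply Hpath, ramp_bounds; lra.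
    + rewrite (ramp_of_nonpos (2 * t - 1)), (ramp_of_nonneg (1 - 2 * t)), E1, E2 by lra.
      apply Hseg; lra.
Qed.

Hypothesis HSigma : axisym_sphere rho0 z0 muS muN.

(* The squared distance to the compact generating curve attains a positive minimum. *)
Lemma not_OnCurve_locally (r z : R) :
  ~ OnCurve rho0 z0 muS muN r z ->
  locally_2d (fun a b => ~ OnCurve rho0 z0 muS muN a b) r z.
Proof.
  intros Hoff.
  destruct HSigma as [Hlt [_ [_ [_ [_ [Hder _]]]]]].
  set (dist2 := fun mu => (rho0 mu - r) ^ 2 + (z0 mu - z) ^ 2).
  assert (Hcont : forall mu, muS <= mu <= muN -> continuity_pt dist2 mu).
  { intros mu Hmu; destruct (Hder mu Hmu) as [D1 [D2 _]].
    apply continuity_pt_ex_derive in D1; apply continuity_pt_ex_derive in D2.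
    unfold dist2; reg. }
  destruct (continuity_ab_min dist2 muS muN (Rlt_le _ _ Hlt) Hcont) as [mmin [Hmin Hmmin]].
  assert (Hpos : 0 < dist2 mmin).
  { destruct (Rle_lt_dec (dist2 mmin) 0) as [H|H]; [exfalso|exact H].
    apply Hoff; exists mmin; unfold dist2 in H.
    pose proof (pow2_ge_0 (rho0 mmin - r)); pose proof (pow2_ge_0 (z0 mmin - z)).
    assert (E1 : rho0 mmin - r = 0) by (apply Rsqr_0_uniq; rewrite Rsqr_pow2; lra).
    assert (E2 : z0 mmin - z = 0) by (apply Rsqr_0_uniq; rewrite Rsqr_pow2; lra).
    split; [exact Hmmin|]; split; lra. }
  set (m := dist2 mmin) in *; set (d := Rmin 1 (m / 2)).
  assert (Hd : 0 < d) by (apply Rmin_pos; lra).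
  assert (Hdd : d * d <= m / 2).
  { assert (d <= 1) by apply Rmin_l; assert (d <= m / 2) by apply Rmin_r; nra. }
  exists (mkposreal d Hd); simpl; intros a b Ha Hb [mu [Hmu [Ea Eb]]].
  specialize (Hmin mu Hmu); unfold dist2 in Hmin; rewrite <- Ea, <- Eb in Hmin.
  apply Rabs_def2 in Ha; apply Rabs_def2 in Hb.
  assert ((a - r) ^ 2 < d * d) by nra; assert ((b - z) ^ 2 < d * d) by nra.
  lra.
Qed.

Lemma KEo_open (r z : R) :
  KEo rho0 z0 muS muN r z -> locally_2d (KEo rho0 z0 muS muN) r z.
Proof.
  intros [HK Hr].
  set (Q := fun a b => 0 < a /\ ~ OnCurve rho0 z0 muS muN a b).
  assert (HQ : locally_2d Q r z).
  { apply locally_2d_and; [|exact (not_OnCurve_locally r z (proj2 (proj1 HK)))].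
    exists (mkposreal r Hr); simpl; intros a b Ha _; apply Rabs_def2 in Ha; lra. }
  refine (locally_2d_impl _ _ r z _ (locally_2d_1d Q r z HQ)).
  apply locally_2d_forall; intros a b Hseg.
  assert (Hon : forall t, 0 <= t <= 1 -> Q (r + t * (a - r)) (z + t * (b - z)))
    by (intros t Ht; exact (locally_2d_singleton _ _ _ (Hseg t Ht))).
  split.
  - apply (KE_of_segment r z a b HK); intros t Ht.
    destruct (Hon t Ht); split; [lra | assumption].
  - destruct (Hon 1) as [H1 _]; [lra|].
    replace a with (r + 1 * (a - r)) by ring; exact H1.
Qed.

End Exterior.

Definition form_eq_at (w v : form1) (r z : R) : Prop :=
  fst w r z = fst v r z /\ snd w r z = snd v r z.

Lemma has_differential_form_eq_at (O : R -> R -> Prop) (u : R -> R -> R) (w : form1) (r z : R) :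
  has_differential O u w -> O r z -> form_eq_at (dF u) w r z.
Proof.
  intros Hu Hp; destruct (Hu r z Hp) as [Dr Dz].
  split; apply is_derive_unique; assumption.
Qed.

Lemma C2_on_pd_comm (O : R -> R -> Prop) (u : R -> R -> R) (r z : R) :
  locally_2d O r z -> C2_on O u -> pd_z (pd_rho u) r z = pd_rho (pd_z u) r z.
Proof.
  intros HO [Cu [Cr Cz]]; symmetry; apply Schwarz.
  - refine (locally_2d_impl _ _ r z (locally_2d_forall _ r z _) HO); intros a b Hab.
    destruct (Cu a b Hab) as [? [? _]], (Cr a b Hab) as [_ [? _]], (Cz a b Hab) as [? _].
    repeat split; assumption.
  - exact (proj1 (proj2 (proj2 (proj2 (Cz r z (locally_2d_singleton _ _ _ HO)))))).
  - exact (proj2 (proj2 (proj2 (proj2 (Cr r z (locally_2d_singleton _ _ _ HO)))))).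
Qed.

Lemma dform_ext_loc (w v : form1) (r z : R) :
  locally_2d (form_eq_at w v) r z -> dform w r z = dform v r z.
Proof.
  intros H; unfold dform, pd_rho, pd_z; f_equal; apply Derive_ext_loc.
  - refine (locally_2d_1d_const_y (fun a b => snd w a b = snd v a b) r z _).
    exact (locally_2d_impl _ _ r z (locally_2d_forall _ r z (fun a b E => proj2 E)) H).
  - refine (locally_2d_1d_const_x (fun a b => fst w a b = fst v a b) r z _).
    exact (locally_2d_impl _ _ r z (locally_2d_forall _ r z (fun a b E => proj1 E)) H).
Qed.

Lemma wedge_form_eq_at (w w' v v' : form1) (r z : R) :
  form_eq_at w w' r z -> form_eq_at v v' r z -> wedge w v r z = wedge w' v' r z.
Proof. intros [E1 E2] [F1 F2]; unfold wedge; rewrite E1, E2, F1, F2; reflexivity. Qed.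

Lemma dform_fscale (f : R -> R -> R) (w : form1) (r z : R) :
  ex_derive (fun t => f t z) r -> ex_derive (fun t => f r t) z ->
  ex_derive (fun t => snd w t z) r -> ex_derive (fun t => fst w r t) z ->
  dform (fscale f w) r z = wedge (dF f) w r z + f r z * dform w r z.
Proof.
  intros Fr Fz Wr Wz; unfold dform, wedge; simpl; unfold pd_rho, pd_z.
  rewrite (Derive_mult (fun t => f t z) (fun t => snd w t z)),
          (Derive_mult (fun t => f r t) (fun t => fst w r t)) by assumption.
  ring.
Qed.

Lemma dform_hodge_rho_times (w : form1) (r z : R) :
  r <> 0 -> dform (hodge (rho_times w)) r z = - r * div_axi w r z.
Proof.
  intros Hr; unfold dform, div_axi, pd_rho, pd_z; simpl.
  rewrite (Derive_opp (fun t => t * fst w t z)), (Derive_scal (fun t => snd w r t)).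
  field; assumption.
Qed.

Lemma wedge_dF_hodge_dF (u : R -> R -> R) (r z : R) :
  wedge (dF u) (hodge (dF u)) r z = - ip u u r z.
Proof. unfold wedge, ip; simpl; ring. Qed.

Lemma sinU_psi (y r z : R) : sinU y r z = r * psi y r z.
Proof. reflexivity. Qed.

Lemma dform_rho_star_T1 (O : R -> R -> Prop) (S1 S2 : R -> R -> R) (w1 w2 : form1) (r z : R) :
  locally_2d O r z -> (forall a b, O a b -> 0 < a) ->
  has_differential O S1 w1 -> has_differential O S2 w2 ->
  ex_derive (fun t => snd w2 t z) r -> ex_derive (fun t => fst w2 r t) z ->
  dform (hodge (rho_times (T1 S1 S2))) r z = - / 2 * (wedge w1 w2 r z + S1 r z * dform w2 r z).
Proof.
  intros HO Hpos HS1 HS2 W2r W2z.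
  pose proof (locally_2d_singleton _ _ _ HO) as Hp.
  assert (Hloc : locally_2d (form_eq_at (hodge (rho_times (T1 S1 S2)))
                                         (fscale (fun a b => - / 2 * S1 a b) w2)) r z).
  { refine (locally_2d_impl _ _ r z (locally_2d_forall _ r z _) HO); intros a b Hab.
    destruct (has_differential_form_eq_at O S2 w2 a b HS2 Hab) as [E1 E2].
    unfold form_eq_at; simpl in E1, E2 |- *; rewrite <- E1, <- E2.
    specialize (Hpos a b Hab); split; field; lra. }
  destruct (HS1 r z Hp) as [D1r D1z].
  rewrite (dform_ext_loc _ _ r z Hloc), dform_fscale;
    [| apply ex_derive_scal; eexists; eassumption .. | assumption | assumption].
  destruct (has_differential_form_eq_at O S1 w1 r z HS1 Hp) as [E1 E2].
  unfold wedge; simpl in E1, E2 |- *; unfold pd_rho, pd_z in *.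
  rewrite (Derive_scal (fun t => S1 t z)), (Derive_scal (fun t => S1 r t)), E1, E2; ring.
Qed.

Definition dZ_form (y : R) (U0 : R -> R -> R) : form1 :=
  fadd (fscale (cosU y) (dF U0)) (fscale (sinU y) (hodge (dF U0))).

Definition dS1_form (y : R) (U0 Z Om : R -> R -> R) : form1 :=
  fscale (fun r z => exp (-2 * U0 r z + 2 * Z r z))
    (fadd (fscale (fun r z => - (1 + cosU y r z)) (dF Om))
          (fscale (fun r z => - sinU y r z) (hodge (dF Om)))).

Definition dS2_form (y : R) (U0 Z Om : R -> R -> R) : form1 :=
  fscale (fun r z => exp (-2 * U0 r z - 2 * Z r z))
    (fadd (fscale (fun r z => 1 - cosU y r z) (dF Om))
          (fscale (fun r z => - sinU y r z) (hodge (dF Om)))).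

Lemma wedge_dS1_dS2_form (y : R) (U0 Z Om : R -> R -> R) (r z : R) :
  wedge (dS1_form y U0 Z Om) (dS2_form y U0 Z Om) r z =
  2 * sinU y r z * exp (-4 * U0 r z) * wedge (dF Om) (hodge (dF Om)) r z.
Proof.
  replace (-4 * U0 r z) with ((-2 * U0 r z + 2 * Z r z) + (-2 * U0 r z - 2 * Z r z)) by ring.
  rewrite exp_plus; unfold wedge; simpl; ring.
Qed.

Lemma dS2_form_closed_at (y : R) (U0 Z Om : R -> R -> R) (r z : R) :
  0 < r ->
  ex_derive (fun t => U0 t z) r -> ex_derive (fun t => U0 r t) z ->
  is_derive (fun t => Z t z) r (fst (dZ_form y U0) r z) ->
  is_derive (fun t => Z r t) z (snd (dZ_form y U0) r z) ->
  ex_derive (fun t => pd_rho Om t z) r -> ex_derive (fun t => pd_rho Om r t) z ->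
  ex_derive (fun t => pd_z Om t z) r -> ex_derive (fun t => pd_z Om r t) z ->
  pd_z (pd_rho Om) r z = pd_rho (pd_z Om) r z ->
  lap Om r z - 4 * ip Om U0 r z = 0 ->
  ex_derive (fun t => snd (dS2_form y U0 Z Om) t z) r /\
  ex_derive (fun t => fst (dS2_form y U0 Z Om) r t) z /\
  dform (dS2_form y U0 Z Om) r z = 0.
Proof.
  intros Hr U1 U2 Z1 Z2 A1 A2 B1 B2 Hsym Heq.
  simpl in Z1, Z2.
  assert (HR : 0 < r * (r * 1) + (z - y) * ((z - y) * 1))
    by (pose proof (Rle_0_sqr (z - y)); unfold Rsqr in *; nra).
  evar (Lr : R). evar (Lz : R).
  assert (Dr : is_derive (fun t => snd (dS2_form y U0 Z Om) t z) r Lr).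
  { unfold dS2_form, cosU, sinU; simpl. auto_derive.
    - repeat split; auto; try exists (cosU y r z * pd_rho U0 r z + sinU y r z * pd_z U0 r z);
        try (apply Rgt_not_eq, sqrt_lt_R0); assumption.
    - unfold Lr; reflexivity. }
  assert (Dz : is_derive (fun t => fst (dS2_form y U0 Z Om) r t) z Lz).
  { unfold dS2_form, cosU, sinU; simpl. auto_derive.
    - repeat split; auto; try exists (cosU y r z * pd_z U0 r z + sinU y r z * - pd_rho U0 r z);
        try (apply Rgt_not_eq, sqrt_lt_R0); assumption.
    - unfold Lz; reflexivity. }
  split; [eexists; exact Dr|]. split; [eexists; exact Dz|].
  transitivity (Lr - Lz); [unfold dform; f_equal; now apply is_derive_unique|].
  unfold Lr, Lz; clear Lr Lz Dr Dz.
  rewrite (is_derive_unique _ _ _ Z1), (is_derive_unique _ _ _ Z2).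
  fold (pd_rho U0 r z) (pd_z U0 r z) (pd_rho (pd_rho Om) r z) (pd_z (pd_rho Om) r z)
       (pd_rho (pd_z Om) r z) (pd_z (pd_z Om) r z).
  unfold lap, ip, cosU, sinU in *. rewrite Hsym.
  replace (z + - y) with (z - y) by ring.
  replace (r * (r * 1) + (z - y) * ((z - y) * 1)) with (r ^ 2 + (z - y) ^ 2) in * by ring.
  assert (HQ : sqrt (r ^ 2 + (z - y) ^ 2) * sqrt (r ^ 2 + (z - y) ^ 2) = r ^ 2 + (z - y) ^ 2)
    by (apply sqrt_sqrt; lra).
  assert (HQ0 : 0 < sqrt (r ^ 2 + (z - y) ^ 2)) by (apply sqrt_lt_R0; lra).
  set (Q := sqrt (r ^ 2 + (z - y) ^ 2)) in *.
  set (E := exp (-2 * U0 r z + - (2 * Z r z))).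
  set (a := pd_rho Om r z) in *. set (b := pd_z Om r z) in *.
  set (arr := pd_rho (pd_rho Om) r z) in *. set (arz := pd_rho (pd_z Om) r z) in *.
  set (bzz := pd_z (pd_z Om) r z) in *.
  set (Ur := pd_rho U0 r z) in *. set (Uz := pd_z U0 r z) in *.
  clearbody Q E a b arr arz bzz Ur Uz.
  assert (Hbzz : bzz = 4 * (a * Ur + b * Uz) - arr - a / r) by (unfold Rdiv; lra).
  subst bzz.
  (* With bzz eliminated by the Omega equation, what is left is a multiple of
     Q^2 - (r^2 + (z - y)^2), where Q is the square root of the latter. *)
  transitivity (E * (a / (Q * Q * Q) + 2 * (a * Uz - b * Ur) / (Q * Q))
                  * (Q * Q - (r ^ 2 + (z - y) ^ 2))).
  - field. lra.
  - rewrite HQ. ring.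
Qed.

Lemma dS2_form_closed (O : R -> R -> Prop) (y : R) (U0 Z Om : R -> R -> R) (r z : R) :
  locally_2d O r z -> 0 < r ->
  C1_on O U0 -> C2_on O Om -> has_differential O Z (dZ_form y U0) ->
  lap Om r z - 4 * ip Om U0 r z = 0 ->
  ex_derive (fun t => snd (dS2_form y U0 Z Om) t z) r /\
  ex_derive (fun t => fst (dS2_form y U0 Z Om) r t) z /\
  dform (dS2_form y U0 Z Om) r z = 0.
Proof.
  intros HO Hr HU0 HOm HZ Heq.
  pose proof (locally_2d_singleton _ _ _ HO) as Hp.
  destruct (HU0 r z Hp) as [U0r [U0z _]], (HZ r z Hp) as [Zr Zz].
  pose proof (C2_on_pd_comm O Om r z HO HOm) as Hsym.
  destruct HOm as [_ [HOmr HOmz]].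
  destruct (HOmr r z Hp) as [Arr [Arz _]], (HOmz r z Hp) as [Azr [Azz _]].
  exact (dS2_form_closed_at y U0 Z Om r z Hr U0r U0z Zr Zz Arr Arz Azr Azz Hsym Heq).
Qed.

Theorem mainTheorem6
  (rho0 z0 : R -> R) (muS muN : R)
  (U0 Om : R -> R -> R) (y : R) (Z S1 S2 : R -> R -> R)
  (HSigma : axisym_sphere rho0 z0 muS muN)
  (HU0reg : regular rho0 z0 muS muN U0)
  (HU0harm : forall r z, KEo rho0 z0 muS muN r z -> lap U0 r z = 0)
  (HOmreg : regular rho0 z0 muS muN Om)
  (HOmeq : forall r z, KEo rho0 z0 muS muN r z ->
             lap Om r z - 4 * ip Om U0 r z = 0)
  (Hy : z0 muS < y < z0 muN)
  (HZ : has_differential (KEo rho0 z0 muS muN) Z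
          (fadd (fscale (cosU y) (dF U0)) (fscale (sinU y) (hodge (dF U0)))))
  (HZinf : vanishes_at_infinity rho0 z0 muS muN Z)
  (HS1 : has_differential (KEo rho0 z0 muS muN) S1
          (fscale (fun r z => exp (-2 * U0 r z + 2 * Z r z))
             (fadd (fscale (fun r z => - (1 + cosU y r z)) (dF Om))
                   (fscale (fun r z => - sinU y r z) (hodge (dF Om))))))
  (HS1inf : vanishes_at_infinity rho0 z0 muS muN S1)
  (HS2 : has_differential (KEo rho0 z0 muS muN) S2
          (fscale (fun r z => exp (-2 * U0 r z - 2 * Z r z))
             (fadd (fscale (fun r z => 1 - cosU y r z) (dF Om))
                   (fscale (fun r z => - sinU y r z) (hodge (dF Om))))))
  (HS2inf : vanishes_at_infinity rho0 z0 muS muN S2) :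
  (forall r z, KEo rho0 z0 muS muN r z ->
     wedge (dF S1) (dF S2) r z =
     2 * sinU y r z * exp (-4 * U0 r z) * wedge (dF Om) (hodge (dF Om)) r z) /\
  (forall r z, KEo rho0 z0 muS muN r z ->
     dform (hodge (rho_times (T1 S1 S2))) r z
     + sinU y r z * exp (-4 * U0 r z) * wedge (dF Om) (hodge (dF Om)) r z = 0) /\
  (forall r z, KEo rho0 z0 muS muN r z ->
     div_axi (T1 S1 S2) r z = - psi y r z * exp (-4 * U0 r z) * ip Om Om r z).
Proof.
  set (K := KEo rho0 z0 muS muN).
  assert (Hopen : forall r z, K r z -> locally_2d K r z) by exact (KEo_open rho0 z0 muS muN HSigma).
  assert (Hwedge : forall r z, K r z -> wedge (dF S1) (dF S2) r z =
            2 * sinU y r z * exp (-4 * U0 r z) * wedge (dF Om) (hodge (dF Om)) r z).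
  { intros r z Hp; rewrite <- (wedge_dS1_dS2_form y U0 Z Om).
    apply wedge_form_eq_at; eapply has_differential_form_eq_at; eassumption. }
  assert (Hrho : forall r z, K r z -> dform (hodge (rho_times (T1 S1 S2))) r z
            + sinU y r z * exp (-4 * U0 r z) * wedge (dF Om) (hodge (dF Om)) r z = 0).
  { intros r z Hp.
    destruct (dS2_form_closed K y U0 Z Om r z (Hopen r z Hp) (proj2 Hp)
                (proj1 (proj1 HU0reg)) (proj1 HOmreg) HZ (HOmeq r z Hp)) as [W2r [W2z Hclosed]].
    rewrite (dform_rho_star_T1 K S1 S2 (dS1_form y U0 Z Om) (dS2_form y U0 Z Om) r z
               (Hopen r z Hp) (fun a b Hab => proj2 Hab) HS1 HS2 W2r W2z),
            Hclosed, wedge_dS1_dS2_form.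
    field. }
  split; [exact Hwedge | split; [exact Hrho |]].
  intros r z Hp; pose proof (Hrho r z Hp) as Hdiv; pose proof (proj2 Hp) as Hr.
  rewrite dform_hodge_rho_times, wedge_dF_hodge_dF, sinU_psi in Hdiv by lra.
  apply (Rmult_eq_reg_l (- r)); lra.
Qed.
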